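(* Let $G=(V,E)$ be a graph and let $\mathcal{M}$ be a nontrivial, unbounded graph matroid family with dimensionality $d$ and threshold $t$, and rank function $r$. Let $k$ be an integer with $k\ge t$. If $\mathcal{M}(G)$ is vertically $(r(K_k)+2)$-connected, then $G$ is $(k+1)$-connected.
   Context: All graphs are finite and simple and have no isolated vertices. A graph matroid family $\mathcal{M}$ assigns to every graph $G$ a matroid $\mathcal{M}(G)$ on $E(G)$ such that (i) every graph isomorphism $V(G)\to V(H)$ induces an isomorphism $\mathcal{M}(G)\to\mathcal{M}(H)$, and (ii) for every subgraph $H$ of $G$, $\mathcal{M}(H)$ is the restriction of $\mathcal{M}(G)$ to $E(H)$. $r(G)$ is the rank of $\mathcal{M}(G)$. $\mathcal{M}$ is nontrivial if some graph $G$ has $r(G)<|E(G)|$, unbounded if $r(K_n)$ is unbounded. An $\mathcal{M}$-circuit is a graph $C$ with $r(C)<|E(C)|$ and $r(C-e)=|E(C)|-1$ for all edges $e$. Dimensionality $d$: minimum over $\mathcal{M}$-circuits of (minimum degree $-1$); threshold $t$: minimum of $|V(C)|-1$ over $\mathcal{M}$-circuits $C$ of minimum degree $d+1$. For a matroid with rank function $r$ on ground set $E$ and positive integer $k$, a bipartition $(E_1,E_2)$ of $E$ is a vertical $k$-separation if $r(E_1),r(E_2)\ge k$ and $r(E_1)+r(E_2)\le r(E)+k-1$; the matroid is vertically $k$-connected if its rank is at least $k$ and it has no vertical $k'$-separation for any positive integer $k'<k$. *)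

From mathcomp Require Import all_boot all_order.
Set Implicit Arguments. Unset Strict Implicit. Unset Printing Implicit Defensive.

(* A (finite, simple, without isolated vertices) graph on an ambient finite
   vertex type T is a set E of 2-element subsets of T; its vertex set is the
   union of its edges (so there are no isolated vertices). *)
Definition is_graph (T : finType) (E : {set {set T}}) : bool :=
  [forall e in E, #|e| == 2].

Definition verts (T : finType) (E : {set {set T}}) : {set T} :=
  \bigcup_(e in E) e.

Definition deg (T : finType) (E : {set {set T}}) (v : T) : nat :=
  #|[set e in E | v \in e]|.

Definition imE (T U : finType) (f : T -> U) (X : {set {set T}}) : {set {set U}} :=
  [set f @: e | e : {set T} in X].

Definition Kn (n : nat) : {set {set 'I_n}} := [set e : {set 'I_n} | #|e| == 2].

(* A graph matroid family is given by its rank functions: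
   M T E is the rank function of the matroid M(G) on E(G) = E. *)
Definition gm_family := forall T : finType, {set {set T}} -> {set {set T}} -> nat.

Definition is_matroid_rank (T : finType) (E : {set {set T}})
  (r : {set {set T}} -> nat) : Prop :=
  (forall X : {set {set T}}, X \subset E -> r X <= #|X|) /\
  (forall X Y : {set {set T}}, X \subset Y -> Y \subset E -> r X <= r Y) /\
  (forall X Y : {set {set T}}, X \subset E -> Y \subset E ->
     r (X :|: Y) + r (X :&: Y) <= r X + r Y).

Definition graph_matroid_family (M : gm_family) : Prop :=
  (forall (T : finType) (E : {set {set T}}), is_graph E -> is_matroid_rank E (M T E)) /\
  (forall (T U : finType) (E : {set {set T}}) (f : T -> U),
     is_graph E -> {in verts E &, injective f} ->
     forall X : {set {set T}}, X \subset E -> M U (imE f E) (imE f X) = M T E X) /\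
  (forall (T : finType) (E E' : {set {set T}}),
     is_graph E -> E' \subset E ->
     forall X : {set {set T}}, X \subset E' -> M T E' X = M T E X).

Definition rk (M : gm_family) (T : finType) (E : {set {set T}}) : nat := M T E E.

Definition rK (M : gm_family) (n : nat) : nat := rk M (Kn n).

Definition nontrivial (M : gm_family) : Prop :=
  exists (T : finType) (E : {set {set T}}), is_graph E /\ rk M E < #|E|.

Definition unbounded (M : gm_family) : Prop :=
  forall b : nat, exists n : nat, b < rK M n.

Definition is_circuit (M : gm_family) (T : finType) (E : {set {set T}}) : Prop :=
  is_graph E /\ rk M E < #|E| /\
  forall e : {set T}, e \in E -> rk M (E :\ e) = #|E| - 1.

Definition min_degree_is (T : finType) (E : {set {set T}}) (m : nat) : Prop :=
  (exists2 v : T, v \in verts E & deg E v = m) /\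
  (forall v : T, v \in verts E -> m <= deg E v).

Definition dimensionality (M : gm_family) (d : nat) : Prop :=
  (exists (T : finType) (C : {set {set T}}), is_circuit M C /\ min_degree_is C d.+1) /\
  (forall (T : finType) (C : {set {set T}}), is_circuit M C ->
     forall v : T, v \in verts C -> d.+1 <= deg C v).

Definition threshold (M : gm_family) (d t : nat) : Prop :=
  (exists (T : finType) (C : {set {set T}}),
     [/\ is_circuit M C, min_degree_is C d.+1 & #|verts C| = t.+1]) /\
  (forall (T : finType) (C : {set {set T}}),
     is_circuit M C -> min_degree_is C d.+1 -> t.+1 <= #|verts C|).

Definition vertical_sep (T : finType) (E : {set {set T}})
  (r : {set {set T}} -> nat) (k : nat) (E1 E2 : {set {set T}}) : Prop :=
  [/\ E1 :|: E2 = E, E1 :&: E2 = set0, k <= r E1, k <= r E2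
    & r E1 + r E2 <= r E + k - 1].

Definition vertically_connected (T : finType) (E : {set {set T}})
  (r : {set {set T}} -> nat) (k : nat) : Prop :=
  k <= r E /\
  forall k', 0 < k' -> k' < k -> ~ exists E1 E2 : {set {set T}}, vertical_sep E r k' E1 E2.

Definition adj_del (T : finType) (E : {set {set T}}) (X : {set T}) : rel T :=
  fun x y => [&& [set x; y] \in E, x \notin X & y \notin X].

Definition k_connected (T : finType) (E : {set {set T}}) (k : nat) : Prop :=
  k < #|verts E| /\
  forall X : {set T}, X \subset verts E -> #|X| < k ->
    forall u v : T, u \in verts E :\: X -> v \in verts E :\: X ->
      connect (adj_del E X) u v.

(* Write r for the rank of M on the complete graph over the vertex type and
   K_Y for the clique on Y. Every circuit has minimum degree at least d+1, so
   an edge with an endpoint of degree at most d is a coloop: attaching a new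
   vertex by at most d edges raises r by the number of edges. Conversely,
   embedding a threshold circuit (t+1 vertices, one of degree d+1) shows that
   when |Y| >= t every edge from a new vertex z is spanned by K_Y together with
   any d of them. Hence r(K_{Y+z}) = r(K_Y) + d, so d > 0 by unboundedness, and
   r(K_A) + r(K_B) <= r(K_A \/ K_B) + r(K_{A/\B}) whenever |A/\B| >= t.
   Now pad a vertex cut of G of size at most k to exactly k vertices. The two
   sides E1, E2 of the cut lie in cliques K_A, K_B with |A/\B| = k, so
   r(E1) + r(E2) <= r(G) + r(K_k), while a vertex private to each side keeps
   r(E1), r(E2) < r(G): a vertical separation of order at most r(K_k) + 1.
   Graphs with at most k+1 vertices are ruled out by similar rank counts. *)

From mathcomp Require Import all_boot all_order.
From mathcomp Require Import zify.
Set Implicit Arguments. Unset Strict Implicit. Unset Printing Implicit Defensive.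

(* Equal terms may differ in hidden canonical-instance arguments (e.g. the
   [reverse_coercion] in [{set {set T}}]), which [lia] sees as distinct atoms;
   [conv_lia] first generalizes the non-arithmetic [nat] atoms up to conversion. *)
Ltac abstract_nat_atoms :=
  repeat match goal with
  | H : is_true (leq _ _) |- _ => revert H
  | H : @eq nat _ _ |- _ => revert H
  end;
  repeat match goal with |- context [?t] =>
    lazymatch type of t with nat => idtac end;
    lazymatch t with
    | addn _ _ => fail | subn _ _ => fail | muln _ _ => fail
    | S _ => fail | O => fail
    | _ => tryif is_var t then fail else
        (let n := fresh "n" in move: t => n;
         lazymatch goal with |- context [t] => fail | _ => idtac end)
    end
  end.

Ltac conv_lia := abstract_nat_atoms; lia.

Lemma set_ind (T : finType) (P : {set T} -> Prop) :
  P set0 -> (forall (x : T) (A : {set T}), x \notin A -> P A -> P (x |: A)) -> forall A, P A.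
Proof.
move=> P0 PS A; elim: {A}#|A| {-2}A (erefl #|A|) => [|n IH] A cardA.
  by move/eqP: cardA; rewrite cards_eq0 => /eqP ->.
have /set0Pn [x xA] : A != set0 by rewrite -card_gt0 cardA.
rewrite -(setD1K xA); apply: PS; first by rewrite setD11.
by apply: IH; move: cardA; rewrite (cardsD1 x A) xA => -[].
Qed.

Lemma exists_subset_card (T : finType) (A : {set T}) n :
  n <= #|A| -> exists2 B : {set T}, B \subset A & #|B| = n.
Proof.
rewrite -bin_gt0 -(cards_draws A n) card_gt0 => /set0Pn [B].
by rewrite inE => /andP [BA /eqP cardB]; exists B.
Qed.

Lemma inj_extend (A B : finType) (f0 : A -> B) (S1 S2 : {set A}) (R1 R2 : {set B}) :
  {in S1 &, injective f0} -> {in S1, forall x, f0 x \in R1} ->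
  [disjoint S1 & S2] -> [disjoint R1 & R2] -> #|S2| <= #|R2| ->
  exists f : A -> B, [/\ {in S1, f =1 f0}, {in S1 :|: S2 &, injective f}
                       & {in S2, forall x, f x \in R2}].
Proof.
move=> f0_inj f0R1 S12 R12 cardS2.
have idxS2 x : x \in S2 -> index x (enum S2) < size (enum R2).
  by move=> xS2; rewrite -cardE (leq_trans _ cardS2) // cardE index_mem mem_enum.
pose g x := nth (f0 x) (enum R2) (index x (enum S2)).
have gR2 x : x \in S2 -> g x \in R2 by move=> xS2; rewrite -mem_enum mem_nth ?idxS2.
have g_inj : {in S2 &, injective g}.
  move=> x y xS2 yS2; rewrite /g (set_nth_default (f0 x) (f0 y)) ?idxS2 // => /eqP.
  rewrite nth_uniq ?enum_uniq ?idxS2 //.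
  by move/eqP/(congr1 (nth x (enum S2))); rewrite !nth_index ?mem_enum.
have S2_S1 x : x \in S2 -> x \notin S1 by move=> xS2; rewrite (disjointFl S12).
pose f x := if x \in S1 then f0 x else g x.
exists f; split; first by move=> x xS1; rewrite /f xS1.
- move=> x y; rewrite /f !inE.
  case xS1: (x \in S1); case yS1: (y \in S1) => //= xS yS.
  + exact: f0_inj.
  + by move=> fxy; move: (gR2 y yS); rewrite -fxy (disjointFr R12) ?f0R1.
  + by move=> fxy; move: (gR2 x xS); rewrite fxy (disjointFr R12) ?f0R1.
  + exact: g_inj.
- by move=> x xS2; rewrite /f (negbTE (S2_S1 x xS2)) gR2.
Qed.

Section MatroidRank.

Variables (T : finType) (E : {set {set T}}) (r : {set {set T}} -> nat).
Hypothesis r_rank : is_matroid_rank E r.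
Implicit Types (A C F S X Y Z : {set {set T}}) (e : {set T}).

Lemma rank_le_card X : X \subset E -> r X <= #|X|.
Proof. by case: r_rank => rX _; apply: rX. Qed.

Lemma rank_mono X Y : X \subset Y -> Y \subset E -> r X <= r Y.
Proof. by case: r_rank => _ [rXY _]; apply: rXY. Qed.

Lemma rank_submod X Y : X \subset E -> Y \subset E ->
  r (X :|: Y) + r (X :&: Y) <= r X + r Y.
Proof. by case: r_rank => _ [_ rXY]; apply: rXY. Qed.

Lemma rank0 : r set0 = 0.
Proof. by apply/eqP; rewrite -leqn0 -(cards0 {set T}) rank_le_card ?sub0set. Qed.

Lemma rankU_le X Y : X \subset E -> Y \subset E -> r (X :|: Y) <= r X + #|Y|.
Proof. by move=> XE YE; have := rank_submod XE YE; have := rank_le_card YE; conv_lia. Qed.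

Lemma rankU1_le X e : X \subset E -> e \in E -> r (e |: X) <= (r X).+1.
Proof.
move=> XE eE; rewrite setUC -addn1 -(cards1 e).
by apply: rankU_le; rewrite ?sub1set.
Qed.

Lemma spanned_mono X Y e : X \subset Y -> Y \subset E -> e \in E ->
  r (e |: X) <= r X -> r (e |: Y) <= r Y.
Proof.
move=> XY YE eE spanX.
have eXE : e |: X \subset E by rewrite subUset sub1set eE (subset_trans XY).
have := rank_submod eXE YE.
rewrite -setUA (setUidPr XY).
have : r X <= r ((e |: X) :&: Y).
  by apply: rank_mono; rewrite ?subsetI ?subsetUr ?XY // (subset_trans (subsetIr _ _)).
conv_lia.
Qed.
Lemma spanned_setU X Z : X \subset E -> Z \subset E ->
  {in Z, forall e, r (e |: X) <= r X} -> r (X :|: Z) <= r X.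
Proof.
move=> XE; elim/set_ind: Z => [|e Z _ IH] ZE spanZ; first by rewrite setU0.
have [eE ZE'] : e \in E /\ Z \subset E by move: ZE; rewrite subUset sub1set => /andP.
rewrite setUCA; apply: leq_trans (IH ZE' (fun x xZ => spanZ x (setU1r _ xZ))).
apply: (spanned_mono (X := X)); rewrite ?subsetUl ?subUset ?XE ?spanZ ?setU11 //.
Qed.

Lemma rank_setU_shift X X' Y : X \subset X' -> X' \subset E -> Y \subset E ->
  r X + r (X' :|: Y) <= r X' + r (X :|: Y).
Proof.
move=> XX' X'E YE.
have XYE : X :|: Y \subset E by rewrite subUset YE (subset_trans XX').
have := rank_submod X'E XYE.
rewrite setUA (setUidPl XX').
have : r X <= r (X' :&: (X :|: Y)).
  by apply: rank_mono; rewrite ?subsetI ?XX' ?subsetUl // (subset_trans (subsetIl _ _)).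
conv_lia.
Qed.

Lemma rank_subset_indep X Y : X \subset Y -> Y \subset E -> r Y = #|Y| -> r X = #|X|.
Proof.
move=> XY YE indepY; apply/eqP; rewrite eqn_leq rank_le_card ?(subset_trans XY) //=.
have := rankU_le (subset_trans XY YE) (subset_trans (subsetDl Y X) YE).
rewrite -{1}(setIidPr XY) setID indepY cardsD (setIidPr XY).
have := subset_leq_card XY; conv_lia.
Qed.

(* If every element of A were a coloop, removing any F from A would lower the
   rank by #|F|; F = A then gives r A = #|A|. *)
Lemma exists_non_coloop A : A \subset E -> r A < #|A| ->
  exists2 g, g \in A & r A <= r (A :\ g).
Proof.
move=> AE dependent; apply/exists_inP; apply: contraLR dependent.
move/exists_inPn => coloops; rewrite -leqNgt.
suff /(_ A (subxx A)) : forall F, F \subset A -> r (A :\: F) + #|F| <= r A.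
  by rewrite setDv rank0.
elim/set_ind => [|x F xF IH] FA; first by rewrite setD0 cards0 addn0.
have [xA FA'] : x \in A /\ F \subset A by move: FA; rewrite subUset sub1set => /andP.
have := rank_submod (subset_trans (subsetDl A F) AE) (subset_trans (subsetDl A [set x]) AE).
have -> : (A :\: F) :|: (A :\ x) = A.
  apply/setP => y; rewrite !inE; case: (y =P x) => [->|_]; first by rewrite xA xF.
  by case: (y \in A); rewrite ?andbF ?andbT ?orbT ?orbF.
have -> : (A :\: F) :&: (A :\ x) = A :\: (x |: F).
  by apply/setP => y; rewrite !inE; case: (y == x); case: (y \in F); case: (y \in A).
have := coloops x xA; have := IH FA'; rewrite cardsU1 xF add1n -ltnNge; conv_lia.
Qed.

Lemma exists_circuit S e : S \subset E -> e \in E -> e \notin S -> r (e |: S) <= r S ->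
  exists2 C : {set {set T}}, C \subset e |: S &
    [/\ e \in C, r C < #|C| & forall f, f \in C -> r (C :\ f) = #|C| - 1].
Proof.
move=> SE eE eS spanned.
pose P (C : {set {set T}}) := [&& C \subset e |: S, e \in C & r C <= r (C :\ e)].
have eSE : e |: S \subset E by rewrite subUset sub1set eE SE.
have [|C minC _] := @minset_exists _ P (e |: S).
  by rewrite /P subxx setU11 setU1K.
have [/and3P [CeS eC spanC] minimal] := minsetP minC.
have CE : C \subset E := subset_trans CeS eSE.
have subCE (D : {set {set T}}) : D \subset C -> D \subset E.
  by move=> DC; apply: subset_trans DC CE.
have cardC : #|C| = #|C :\ e|.+1 by rewrite (cardsD1 e C) eC.
have indep : r (C :\ e) = #|C :\ e|.
  apply/eqP; rewrite eqn_leq rank_le_card ?subCE ?subsetDl // leqNgt; apply/negP => dep.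
  have [g] := exists_non_coloop (subCE _ (subsetDl C [set e])) dep.
  rewrite !inE => /andP [ge gC] span_g.
  suff /setP /(_ g) : C :\ g = C by rewrite !inE eqxx gC.
  apply: minimal; last exact: subsetDl.
  rewrite /P (subset_trans (subsetDl _ _)) //= !inE eq_sym ge eC /=.
  rewrite setDDl setUC -setDDl; apply: leq_trans (leq_trans _ spanC) span_g.
  exact: rank_mono (subsetDl _ _) CE.
exists C => //; split=> //; first by rewrite cardC -indep ltnS.
move=> f fC; case: (f =P e) => [->|/eqP fe]; first by rewrite indep cardC subn1.
have not_span : r (C :\ f :\ e) < r (C :\ f).
  rewrite ltnNge; apply/negP => span_f.
  suff /setP /(_ f) : C :\ f = C by rewrite !inE eqxx fC.
  apply: minimal; last exact: subsetDl.
  by rewrite /P (subset_trans (subsetDl _ _)) //= !inE eq_sym fe eC.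
have indep' : r (C :\ f :\ e) = #|C :\ f :\ e|.
  apply: (rank_subset_indep _ (subCE _ (subsetDl C [set e])) indep).
  by rewrite setDDl setUC -setDDl subsetDl.
apply/eqP; rewrite eqn_leq; apply/andP; split.
  apply: leq_trans (rank_le_card (subCE _ (subsetDl C [set f]))) _.
  by rewrite (cardsD1 f C) fC add1n subn1.
move: not_span; rewrite indep' (cardsD1 f C) fC (cardsD1 e (C :\ f)) !inE eq_sym fe eC /=.
by conv_lia.
Qed.

Lemma vertical_rank_gap m (E1 : {set {set T}}) : vertically_connected E r m.+2 ->
  E1 \subset E -> r E1 < r E -> r (E :\: E1) < r E -> r E + m < r E1 + r (E :\: E1).
Proof.
case=> _ no_sep E1E ltE1 ltE2; rewrite ltnNge; apply/negP => small.
have E2E : E :\: E1 \subset E := subsetDl E E1.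
have partE : E1 :|: (E :\: E1) = E by rewrite -{1}(setIidPr E1E) setID.
have disj : E1 :&: (E :\: E1) = set0.
  by apply/setP => x; rewrite !inE; case: (x \in E1); rewrite ?andbF.
have := rank_submod E1E E2E; rewrite partE disj rank0 addn0 => submod.
apply: (no_sep (r E1 + r (E :\: E1) - r E).+1) => //; first by conv_lia.
by exists E1, (E :\: E1); split=> //; conv_lia.
Qed.

End MatroidRank.

Definition complete (T : finType) : {set {set T}} := [set e : {set T} | #|e| == 2].
Arguments complete T : clear implicits.

Definition clique (T : finType) (Y : {set T}) : {set {set T}} :=
  [set e in complete T | e \subset Y].

Definition star (T : finType) (z : T) (N : {set T}) : {set {set T}} :=
  [set [set z; n] | n in N].

Definition nbrs (T : finType) (E : {set {set T}}) (v : T) : {set T} :=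
  [set w | [set v; w] \in E].

Section Graphs.

Variable T : finType.
Implicit Types (E G : {set {set T}}) (e : {set T}) (N X Y : {set T}).

Lemma is_graph_complete E : is_graph E = (E \subset complete T).
Proof. by apply/forall_inP/subsetP => E2 e /E2; rewrite inE. Qed.

Lemma in_complete e : (e \in complete T) = (#|e| == 2).
Proof. by rewrite inE. Qed.

Lemma set2_complete (x y : T) : ([set x; y] \in complete T) = (x != y).
Proof. by rewrite inE cards2; case: (x != y). Qed.

Lemma graph_edge_card E e : is_graph E -> e \in E -> #|e| = 2.
Proof. by move=> /forall_inP E2 /E2 /eqP. Qed.

Lemma mem_verts E e x : e \in E -> x \in e -> x \in verts E.
Proof. by move=> eE xe; apply/bigcupP; exists e. Qed.

Lemma edge_at e x : #|e| = 2 -> x \in e -> exists2 y, y != x & e = [set x; y].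
Proof.
move=> /eqP /cards2P [a [b [ab ->]]]; rewrite !inE => /orP [] /eqP ->.
  by exists b; rewrite // eq_sym.
by exists a; rewrite // setUC.
Qed.

Lemma set2_injr (x y y' : T) : y != x -> [set x; y] = [set x; y'] -> y = y'.
Proof.
move=> yx xy_xy'; have : y \in [set x; y'] by rewrite -xy_xy' !inE eqxx orbT.
by rewrite !inE (negbTE yx) => /eqP.
Qed.

Lemma deg_card_nbrs E v : is_graph E -> deg E v = #|nbrs E v|.
Proof.
move=> gE; rewrite /deg.
have -> : [set e in E | v \in e] = [set [set v; w] | w in nbrs E v].
  apply/setP=> e; rewrite inE; apply/andP/imsetP => [[eE ve]|[w]].
    have [w wv ew] := edge_at (graph_edge_card gE eE) ve.
    by exists w; rewrite // inE -ew.
  by rewrite inE => wE ->; rewrite wE !inE eqxx.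
rewrite card_in_imset // => w w'; rewrite inE => /(graph_edge_card gE) vw _.
by apply: set2_injr; apply: contra_eqN vw => /eqP ->; rewrite setUid cards1.
Qed.

Lemma nbrs_sub E v : is_graph E -> nbrs E v \subset verts E :\ v.
Proof.
move=> gE; apply/subsetP => w; rewrite !inE => vwE.
rewrite (mem_verts vwE) ?setU11 ?setU1r ?inE // andbT.
by apply: contra_eqN (graph_edge_card gE vwE) => /eqP ->; rewrite setUid cards1.
Qed.

Lemma verts_setU E E' : verts (E :|: E') = verts E :|: verts E'.
Proof. exact: bigcup_setU. Qed.

Lemma deg_mono E E' v : E \subset E' -> deg E v <= deg E' v.
Proof.
move=> EE'; apply: subset_leq_card; apply/subsetP => e; rewrite !inE.
by case/andP => /(subsetP EE') -> ->.
Qed.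

Lemma clique_sub_complete Y : clique Y \subset complete T.
Proof. by apply/subsetP => e; rewrite inE => /andP []. Qed.

Lemma verts_clique Y : verts (clique Y) \subset Y.
Proof. by apply/bigcupsP => e; rewrite inE => /andP []. Qed.

Lemma clique_mono Y Y' : Y \subset Y' -> clique Y \subset clique Y'.
Proof.
by move=> YY'; apply/subsetP => e; rewrite !inE => /andP [-> /subset_trans]; apply.
Qed.

Lemma graph_sub_clique G : is_graph G -> G \subset clique (verts G).
Proof.
rewrite is_graph_complete => /subsetP GK; apply/subsetP => e eG.
by rewrite inE GK //=; apply/subsetP => x; apply: mem_verts.
Qed.

Lemma star_sub_complete z N : z \notin N -> star z N \subset complete T.
Proof.
move=> zN; apply/subsetP => _ /imsetP [n nN ->]; rewrite set2_complete.
by apply: contraNneq zN => ->.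
Qed.

Lemma cliqueU1 z Y : z \notin Y -> clique (z |: Y) = clique Y :|: star z Y.
Proof.
move=> zY; apply/setP => e; rewrite !inE; apply/idP/idP.
  case/andP => e2 eY; case: (boolP (z \in e)) => ze.
    have [y yz ez] := edge_at (eqP e2) ze.
    move: eY; rewrite ez subUset !sub1set !inE eqxx (negbTE yz) /= => yY.
    by apply/orP; right; apply: imset_f.
  rewrite e2 /=; apply/orP; left; apply/subsetP => x xe; move/subsetP: eY => /(_ x xe).
  by rewrite !inE => /orP [/eqP xz|//]; rewrite -xz xe in ze.
case/orP => [/andP [-> /subset_trans]|/imsetP [y yY ->]]; first by apply; apply: subsetUr.
have zy : z != y by apply: contraNneq zY => ->.
by rewrite cards2 zy subUset !sub1set setU11 setU1r.
Qed.

Lemma adj_del_connect_mono G X Y u v : X \subset Y ->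
  connect (adj_del G Y) u v -> connect (adj_del G X) u v.
Proof.
move=> XY; apply: connect_sub => x y /and3P [xyG xY yY]; apply: connect1.
by rewrite /adj_del xyG (contra (subsetP XY x)) ?(contra (subsetP XY y)).
Qed.

Lemma extend_cut (V X : {set T}) u v k : u \in V :\: X -> v \in V :\: X -> u != v ->
  #|X| <= k -> k.+1 < #|V| ->
  exists2 Y : {set T}, X \subset Y & [&& #|Y| == k, u \notin Y & v \notin Y].
Proof.
move=> /setDP [uV uX] /setDP [vV vX] uv cardX manyV.
set W := V :\: X :\ u :\ v.
have [P PW cardP] : exists2 P : {set T}, P \subset W & #|P| = k - #|X|.
  apply: exists_subset_card.
  have := cardsD1 v (V :\: X :\ u); have := cardsD1 u (V :\: X).
  rewrite !in_setD1 eq_sym uv !in_setD uX vX uV vV /= (cardsD V X).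
  have := subset_leq_card (subsetIr V X); conv_lia.
have XP0 : X :&: P = set0.
  apply/setP => x; rewrite !inE; apply/negP => /andP [xX /(subsetP PW)].
  by rewrite !inE xX !andbF.
exists (X :|: P); first exact: subsetUl.
rewrite cardsU cardP XP0 cards0 !in_setU (negbTE uX) (negbTE vX) /=.
apply/and3P; split; first by apply/eqP; conv_lia.
  by apply/negP => /(subsetP PW); rewrite !inE eqxx /= ?andbF.
by apply/negP => /(subsetP PW); rewrite !inE eqxx.
Qed.

Lemma vertex_cut_separation G Y u v : is_graph G -> u \in verts G -> v \in verts G ->
  u \notin Y -> v \notin Y -> ~~ connect (adj_del G Y) u v ->
  exists A B E1, [/\ E1 \subset G, A :&: B = Y, E1 \subset clique A,
    G :\: E1 \subset clique B & (u \in verts E1 :\: B) && (v \in verts (G :\: E1) :\: A)].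
Proof.
move=> gG /bigcupP [eu euG ueu] /bigcupP [ev evG vev] uY vY disc.
pose C := [set w | connect (adj_del G Y) u w].
have uC : u \in C by rewrite inE connect0.
have CY x : x \in C -> x \notin Y.
  have closedY : closed (adj_del G Y) [pred x | x \notin Y].
    by move=> a b /and3P [_ aY bY]; rewrite !inE aY bY.
  by rewrite inE => /(closed_connect closedY); rewrite !inE uY => <-.
have edgeC e x : e \in G -> x \in e -> x \in C -> e \subset C :|: Y.
  move=> eG xe xC; have xY := CY x xC.
  have [w wx ew] := edge_at (graph_edge_card gG eG) xe.
  rewrite ew subUset !sub1set !in_setU xC /=.
  case: (boolP (w \in Y)) => wY; rewrite ?orbT // orbF.
  move: xC; rewrite !inE => /connect_trans; apply; apply: connect1.
  by rewrite /adj_del -ew eG xY wY.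
exists (C :|: Y), ((verts G :\: C) :|: Y), [set e in G | e \subset C :|: Y]; split.
- by apply/subsetP => e; rewrite inE => /andP [].
- apply/setP => x; rewrite !inE.
  by case: (x \in Y); case: connect; rewrite ?orbT ?orbF ?andbF.
- apply/subsetP => e; rewrite !inE => /andP [eG ->].
  by rewrite -in_complete (subsetP _ _ eG) // -is_graph_complete.
- apply/subsetP => e; rewrite !inE => /andP [eA eG]; rewrite eG /= in eA.
  rewrite -in_complete (subsetP _ _ eG) -?is_graph_complete //=.
  apply/subsetP => x xe; rewrite !inE (mem_verts eG xe) andbT.
  by apply/orP; left; apply: contra eA => xC; apply: (edgeC e x); rewrite ?inE.
- have uA : u \in verts [set e in G | e \subset C :|: Y].
    by apply: (mem_verts _ ueu); rewrite inE euG (edgeC eu u).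
  have vC : v \notin C by rewrite inE.
  have vE2 : v \in verts (G :\: [set e in G | e \subset C :|: Y]).
    apply: (mem_verts _ vev); rewrite !inE evG andbT /=; apply/negP => /subsetP /(_ v vev).
    by rewrite inE (negbTE vC) (negbTE vY).
  by rewrite !in_setD uA vE2 !in_setU in_setD uC (negbTE vC) (negbTE vY) (negbTE uY).
Qed.

End Graphs.

Lemma imE_clique (T U : finType) (f : T -> U) (V : {set T}) :
  {in V &, injective f} -> imE f (clique V) = clique (f @: V).
Proof.
move=> finj; apply/setP => e'; apply/imsetP/idP => [[e]|].
  rewrite !inE => /andP [e2 eV] ->; rewrite imsetS // andbT.
  by rewrite card_in_imset // => x y /(subsetP eV) xV /(subsetP eV); apply: finj.
rewrite !inE => /andP [/cards2P [a [b [ab ->]]]].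
rewrite subUset !sub1set => /andP [/imsetP [x xV a_fx] /imsetP [y yV b_fy]].
subst a b.
exists [set x; y]; last by rewrite imsetU1 imset_set1.
have xy : x != y by apply: contraNneq ab => ->.
by rewrite !inE cards2 xy subUset !sub1set xV yV.
Qed.

Section GraphMatroid.

Variable M : gm_family.
Hypothesis M_family : graph_matroid_family M.
Variable T : finType.
Local Notation rho := (@M T (complete T)).
Implicit Types (C E S X : {set {set T}}) (e : {set T}).

Lemma rank_rho : is_matroid_rank (complete T) rho.
Proof. by case: M_family => rank _; apply: rank; rewrite is_graph_complete. Qed.

Lemma rho_restr E X : E \subset complete T -> X \subset E -> @M T E X = rho X.
Proof.
case: M_family => _ [_ restr] EK XE.
by apply: restr; rewrite ?is_graph_complete.
Qed.

Lemma circuit_of_spanned S e : S \subset complete T -> e \in complete T -> e \notin S ->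
  rho (e |: S) <= rho S -> exists2 C : {set {set T}}, C \subset e |: S & e \in C /\ is_circuit M C.
Proof.
move=> SK eK eS spanned.
have [C CeS [eC dep crit]] := exists_circuit rank_rho SK eK eS spanned.
have CK : C \subset complete T by rewrite (subset_trans CeS) // subUset sub1set eK.
exists C => //; split=> //; split; first by rewrite is_graph_complete.
rewrite /rk rho_restr //; split=> // f fC.
by rewrite rho_restr ?crit // (subset_trans (subsetDl _ _)).
Qed.

Lemma circuit_image_spanned (T0 : finType) (C : {set {set T0}}) (f : T0 -> T) (e : {set T0}) :
  is_circuit M C -> {in verts C &, injective f} -> e \in C ->
  rho (f @: e |: imE f (C :\ e)) <= rho (imE f (C :\ e)).
Proof.
case=> gC [dep crit] finj eC; case: M_family => _ [iso restr].
have imK : imE f C \subset complete T.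
  apply/subsetP => _ /imsetP [e' e'C ->]; rewrite in_complete card_in_imset.
    by rewrite (graph_edge_card gC e'C).
  by move=> x y xe' ye'; apply: finj; apply: mem_verts e'C _.
have rho_im (X : {set {set T0}}) : X \subset C -> rho (imE f X) = @M T0 C X.
  by move=> XC; rewrite -(rho_restr imK) ?imsetS // iso.
rewrite /imE -imsetU1 setD1K // -!/(imE f _) !rho_im ?subsetDl //.
rewrite -(restr _ C (C :\ e) gC (subsetDl _ _) (C :\ e) (subxx _)).
by rewrite -/(rk M C) -/(rk M (C :\ e)) crit // -ltnS subn1 prednK // (leq_ltn_trans _ dep).
Qed.

Lemma rho_vertical_gap G m E1 : is_graph G -> vertically_connected G (@M T G) m.+2 ->
  E1 \subset G -> rho E1 < rho G -> rho (G :\: E1) < rho G ->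
  rho G + m < rho E1 + rho (G :\: E1).
Proof.
move=> gG vc E1G; have GK : G \subset complete T by rewrite -is_graph_complete.
case: M_family => rank _.
by rewrite -!(rho_restr GK) ?subsetDl //; apply: (vertical_rank_gap (rank T G gG)).
Qed.

Lemma rK_clique (Y : {set T}) : rK M #|Y| = rho (clique Y).
Proof.
pose f := @enum_val T (mem Y); have f_inj : injective f := @enum_val_inj _ _.
have fY : f @: [set: 'I_#|Y|] = Y.
  apply/eqP; rewrite eqEcard card_imset // cardsT card_ord leqnn andbT.
  by apply/subsetP => _ /imsetP [i _ ->]; apply: enum_valP.
have KnE : Kn #|Y| = clique [set: 'I_#|Y|].
  by apply/setP => e; rewrite !inE subsetT andbT.
have Kn_graph : is_graph (Kn #|Y|) by rewrite KnE is_graph_complete clique_sub_complete.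
case: M_family => _ [iso _]; rewrite /rK /rk -(iso _ _ _ f Kn_graph (in2W f_inj) _ (subxx _)).
by rewrite KnE (imE_clique (in2W f_inj)) fY rho_restr ?clique_sub_complete.
Qed.

End GraphMatroid.

Lemma rK_mono (M : gm_family) (M_family : graph_matroid_family M) a b :
  a <= b -> rK M a <= rK M b.
Proof.
move=> ab; have [Y _ <-] : exists2 Y : {set 'I_b}, Y \subset setT & #|Y| = a.
  by apply: exists_subset_card; rewrite cardsT card_ord.
have -> : rK M b = @M 'I_b (complete 'I_b) (clique [set: 'I_b]).
  by rewrite -(rK_clique M_family) cardsT card_ord.
rewrite (rK_clique M_family); apply: (rank_mono (rank_rho M_family _)).
  by rewrite clique_mono ?subsetT.
exact: clique_sub_complete.
Qed.

Section Dimensionality.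

Variable M : gm_family.
Hypothesis M_family : graph_matroid_family M.
Variable d : nat.
Hypothesis circuit_deg : forall (T : finType) (C : {set {set T}}),
  is_circuit M C -> forall v, v \in verts C -> d.+1 <= deg C v.

Section Coloops.

Variable T : finType.
Local Notation rho := (@M T (complete T)).
Implicit Types (S : {set {set T}}) (e : {set T}) (N Y : {set T}).

Lemma rho_coloop S e z : S \subset complete T -> e \in complete T -> e \notin S ->
  z \in e -> deg (e |: S) z <= d -> rho (e |: S) = (rho S).+1.
Proof.
move=> SK eK eS ze low; apply/eqP.
rewrite eqn_leq (rankU1_le (rank_rho M_family T)) //= ltnNge; apply/negP => spanned.
have [C CeS [eC circ]] := circuit_of_spanned M_family SK eK eS spanned.
have := circuit_deg circ (mem_verts eC ze).
by rewrite ltnNge (leq_trans (deg_mono z CeS)).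
Qed.

Lemma rho_star S z N : S \subset complete T -> z \notin verts S -> z \notin N ->
  #|N| <= d -> rho (S :|: star z N) = rho S + #|N|.
Proof.
move=> SK zS; elim/set_ind: N => [|n N nN IH] zN lowN.
  by rewrite /star imset0 setU0 cards0 addn0.
have [zn zN'] : z != n /\ z \notin N by move: zN; rewrite !inE negb_or => /andP.
have NK := star_sub_complete zN'.
rewrite /star imsetU1 -/(star z N) setUCA cardsU1 nN add1n addnS -IH //; last first.
  by move: lowN; rewrite cardsU1 nN; lia.
apply: (rho_coloop (z := z)); rewrite ?subUset ?SK ?NK ?set2_complete ?setU11 //.
- rewrite !inE negb_or; apply/andP; split.
    by apply: contra zS => zn_S; apply: mem_verts zn_S _; rewrite setU11.
  apply/imsetP => -[n' n'N /(set2_injr (y := n))]; rewrite eq_sym => /(_ zn) nn'.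
  by move: nN; rewrite nn' n'N.
- apply: leq_trans lowN; apply: leq_trans (leq_imset_card (fun w => [set z; w]) _).
  apply: subset_leq_card; apply/subsetP => f; rewrite !inE => /andP [].
  case/or3P => [/eqP -> _|fS zf|fN _]; first by apply: imset_f; rewrite setU11.
    by move: zS; rewrite (mem_verts fS zf).
  by apply: (subsetP (imsetS _ (subsetUr _ _))).
Qed.

Lemma card_le_rho_clique Y : 0 < d -> #|Y| <= (rho (clique Y)).+1.
Proof.
move=> d_gt0; elim/set_ind: Y => [|y Y yY IH]; first by rewrite cards0.
have [->|[y0 y0Y]] := set_0Vmem Y; first by rewrite setU0 cards1.
have y0y : y \notin [set y0] by rewrite inE; apply: contraNneq yY => ->.
have yV : y \notin verts (clique Y) by apply: contra yY; apply: (subsetP (verts_clique Y)).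
have := rho_star (clique_sub_complete Y) yV y0y; rewrite cards1 => /(_ d_gt0) grow.
rewrite cardsU1 yY add1n ltnS (leq_trans IH) // -addn1 -grow.
rewrite (rank_mono (rank_rho M_family T)) ?clique_sub_complete // cliqueU1 //.
by rewrite setUS // imsetS // sub1set.
Qed.

End Coloops.

Section Threshold.

Variables (t : nat) (T0 : finType) (C0 : {set {set T0}}) (c0 : T0).
Hypotheses (C0_circuit : is_circuit M C0) (c0_verts : c0 \in verts C0)
  (c0_deg : deg C0 c0 = d.+1) (C0_card : #|verts C0| = t.+1).

Let C0_graph : is_graph C0. Proof. by case: C0_circuit. Qed.

Lemma dim_lt_threshold : d < t.
Proof.
have cardV : #|verts C0 :\ c0| = t by move: C0_card; rewrite (cardsD1 c0) c0_verts => -[].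
by rewrite -cardV -c0_deg deg_card_nbrs // subset_leq_card // nbrs_sub.
Qed.

Section Cliques.

Variable T : finType.
Local Notation rho := (@M T (complete T)).
Implicit Types (E G S : {set {set T}}) (e : {set T}) (A B N X Y : {set T}).

Lemma threshold_embedding Y N z y : t <= #|Y| -> z \notin Y -> N \subset Y ->
  #|N| = d -> y \in Y -> y \notin N ->
  exists f : T0 -> T, [/\ {in verts C0 &, injective f}, f c0 = z,
    {in verts C0 :\ c0, forall x, f x \in Y} & f @: nbrs C0 c0 = y |: N].
Proof.
move=> tY zY NY cardN yY yN.
set V0 := verts C0; set Nc := nbrs C0 c0.
have NcV : Nc \subset V0 :\ c0 := nbrs_sub c0 C0_graph.
have c0Nc : c0 \notin Nc by apply/negP => /(subsetP NcV); rewrite setD11.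
have yNY : y |: N \subset Y by rewrite subUset sub1set yY NY.
have zyN : z \notin y |: N by apply: contra zY; apply: (subsetP yNY).
have cardyN : #|y |: N| = d.+1 by rewrite cardsU1 yN cardN.
have cardNc : #|Nc| = d.+1 by rewrite -deg_card_nbrs.
have c0NcV : c0 |: Nc \subset V0.
  by rewrite subUset sub1set c0_verts (subset_trans NcV) ?subsetDl.
have [f1 [f1c0 f1_inj f1Nc]] : exists f1 : T0 -> T, [/\ {in [set c0], f1 =1 fun=> z},
    {in c0 |: Nc &, injective f1} & {in Nc, forall x, f1 x \in y |: N}].
  apply: (inj_extend (R1 := [set z])); rewrite ?disjoints1 ?cardNc ?cardyN //.
    by move=> a b /set1P -> /set1P ->.
  by move=> a _; rewrite inE.
have [f [ff1 f_inj fV]] : exists f : T0 -> T, [/\ {in c0 |: Nc, f =1 f1},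
    {in (c0 |: Nc) :|: (V0 :\: (c0 |: Nc)) &, injective f}
    & {in V0 :\: (c0 |: Nc), forall x, f x \in Y :\: (y |: N)}].
  apply: (inj_extend (R1 := z |: (y |: N))) => //.
  - move=> x /setU1P [->|xNc]; last by rewrite setU1r ?f1Nc.
    by rewrite f1c0 ?set11 ?setU11.
  - by rewrite disjoint_sym; apply/setDidPl; rewrite setDDl setUid.
  - rewrite -setI_eq0; apply/eqP/setP => x; rewrite !inE.
    case: (x =P z) => [->|_] /=; first by rewrite (negbTE zY) !andbF.
    by case: (_ || _).
  - rewrite !cardsD (setIidPr c0NcV) (setIidPr yNY) C0_card cardsU1 c0Nc cardNc cardyN.
    by move: tY; clear; lia.
rewrite setDE setUIr setUCr setIT (setUidPr c0NcV) in f_inj.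
have fc0 : f c0 = z by rewrite ff1 ?setU11 // f1c0 ?set11.
have fNc x : x \in Nc -> f x = f1 x by move=> xNc; rewrite ff1 ?setU1r.
exists f; split=> //.
- move=> x; rewrite in_setD1 => /andP [xc0 xV].
  case: (boolP (x \in Nc)) => [xNc|xNc]; first by rewrite fNc // (subsetP yNY) ?f1Nc.
  have : x \in V0 :\: (c0 |: Nc) by rewrite in_setD in_setU1 negb_or xc0 xNc xV.
  by move/fV; rewrite inE => /andP [].
have NcV0 : Nc \subset V0 by rewrite (subset_trans NcV) ?subsetDl.
apply/eqP; rewrite eqEcard cardyN -cardNc card_in_imset ?leqnn ?andbT; last first.
  by move=> a b /(subsetP NcV0) aV /(subsetP NcV0) bV; apply: f_inj.
apply/subsetP => _ /imsetP [x xNc ->]; rewrite fNc ?f1Nc //.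
Qed.

(* Embed the threshold circuit with c0 |-> z, one neighbour c1 of c0 |-> y and
   the other neighbours onto N: all its edges but the image zy of c0c1 lie in
   K_Y \/ star z N, and a circuit spans each of its edges. *)
Lemma star_edge_spanned Y N z y : t <= #|Y| -> z \notin Y -> N \subset Y ->
  #|N| = d -> y \in Y -> y \notin N ->
  rho ([set z; y] |: (clique Y :|: star z N)) <= rho (clique Y :|: star z N).
Proof.
move=> tY zY NY cardN yY yN.
have [f [f_inj fc0 fY fNc]] := threshold_embedding tY zY NY cardN yY yN.
have [c1 c1Nc fc1] : exists2 c1, c1 \in nbrs C0 c0 & y = f c1.
  by apply/imsetP; rewrite fNc setU11.
have e0C0 : [set c0; c1] \in C0 by move: c1Nc; rewrite inE.
have := circuit_image_spanned M_family C0_circuit f_inj e0C0.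
rewrite imsetU1 imset_set1 fc0 -fc1.
have zN : z \notin N by apply: contra zY; apply: (subsetP NY).
apply: (spanned_mono (rank_rho M_family T)).
- apply/subsetP => _ /imsetP [e /setD1P [ee0 eC0] ->].
  have eV x : x \in e -> x \in verts C0 by apply: mem_verts.
  case: (boolP (c0 \in e)) => c0e.
    have [w wc0 ew] := edge_at (graph_edge_card C0_graph eC0) c0e.
    have wNc : w \in nbrs C0 c0 by rewrite inE -ew.
    have fwN : f w \in N.
      have : f w \in y |: N by rewrite -fNc imset_f.
      case/setU1P => // fwy; move: ee0; rewrite ew.
      have wV : w \in verts C0 by apply: eV; rewrite ew setU1r ?set11.
      have c1V : c1 \in verts C0 by apply: mem_verts e0C0 _; rewrite setU1r ?set11.
      by rewrite (f_inj w c1) ?eqxx // fwy fc1.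
    by rewrite ew imsetU1 imset_set1 fc0 inE (imset_f (fun n => [set z; n])) ?orbT.
  rewrite !inE card_in_imset ?(graph_edge_card C0_graph eC0) //=; last first.
    by move=> a b ae be; apply: f_inj; apply: eV.
  apply/orP; left; apply/subsetP => _ /imsetP [x xe ->]; apply: fY.
  by rewrite in_setD1 eV // andbT; apply: contraNneq c0e => <-.
- by rewrite subUset clique_sub_complete star_sub_complete.
- by rewrite set2_complete; apply: contraNneq zY => ->.
Qed.

Lemma rho_cliqueU1 Y z : t <= #|Y| -> z \notin Y ->
  rho (clique (z |: Y)) = rho (clique Y) + d.
Proof.
move=> tY zY; have rank := rank_rho M_family T.
have [N NY cardN] := exists_subset_card (ltnW (leq_trans dim_lt_threshold tY)).
have zN : z \notin N by apply: contra zY; apply: (subsetP NY).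
have zV : z \notin verts (clique Y) by apply: contra zY; apply: (subsetP (verts_clique Y)).
rewrite -cardN -(rho_star (clique_sub_complete Y) zV zN) ?cardN //.
rewrite cliqueU1 //; apply/eqP; rewrite eqn_leq; apply/andP; split; last first.
  by rewrite (rank_mono rank) ?setUS ?imsetS // -cliqueU1 ?clique_sub_complete.
have -> : star z Y = star z N :|: star z (Y :\: N).
  by rewrite -imsetU -{1}(setID Y N) (setIidPr NY).
have KN : clique Y :|: star z N \subset complete T.
  by rewrite subUset clique_sub_complete star_sub_complete.
rewrite setUA (spanned_setU rank KN) ?star_sub_complete ?inE ?(negbTE zY) ?andbF //.
by move=> _ /imsetP [w /setDP [wY wN] ->]; apply: star_edge_spanned.
Qed.

(* Induction on A :\: B: each new vertex raises r(K_A) by exactly d, and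
   r(K_A \/ K_B) by at least d, through a star to d old vertices of A :&: B. *)
Lemma clique_modular A B : t <= #|A :&: B| ->
  rho (clique A) + rho (clique B) <= rho (clique A :|: clique B) + rho (clique (A :&: B)).
Proof.
move=> tY; set Y := A :&: B; have rank := rank_rho M_family T.
have [N NY cardN] := exists_subset_card (ltnW (leq_trans dim_lt_threshold tY)).
suff grow (Z : {set T}) : [disjoint Z & B] -> rho (clique (Y :|: Z)) + rho (clique B)
    <= rho (clique (Y :|: Z) :|: clique B) + rho (clique Y).
  by have := grow (A :\: B); rewrite setID; apply; apply/setDidPl; rewrite setDDl setUid.
elim/set_ind: Z => [|z Z zZ IH] disjZ.
  by rewrite setU0 (setUidPr (clique_mono (subsetIr A B))) addnC.
have [zB disjZ'] : z \notin B /\ [disjoint Z & B].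
  by move: disjZ; rewrite -setI_eq0 setIUl setU_eq0 !setI_eq0 disjoints1 => /andP.
set X := Y :|: Z.
have zX : z \notin X by rewrite in_setU negb_or zZ andbT; apply: contra zB => /setIP [].
have tX : t <= #|X| by rewrite (leq_trans tY) ?subset_leq_card ?subsetUl.
have zN : z \notin N by apply: contra zB => /(subsetP NY) /setIP [].
have zV : z \notin verts (clique X :|: clique B).
  rewrite verts_setU in_setU negb_or; apply/andP; split; [apply: contra zX|apply: contra zB];
  exact: (subsetP (verts_clique _)).
have XBK : clique X :|: clique B \subset complete T by rewrite subUset !clique_sub_complete.
have lower := rho_star XBK zV zN (eq_leq cardN).
have grown : clique X :|: clique B :|: star z N \subset clique (z |: X) :|: clique B.
  rewrite cliqueU1 // setUAC setSU // setUS // imsetS //.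
  by rewrite (subset_trans NY) ?subsetUl.
have := rank_mono rank grown; rewrite subUset !clique_sub_complete => /(_ isT).
rewrite setUCA -/X rho_cliqueU1 // lower cardN => grown_rank.
rewrite addnAC (leq_trans (leq_add (IH disjZ') (leqnn d))) //.
by rewrite addnAC leq_add2r.
Qed.

Lemma subclique_submod A B E1 E2 : t <= #|A :&: B| ->
  E1 \subset clique A -> E2 \subset clique B ->
  rho E1 + rho E2 <= rho (E1 :|: E2) + rho (clique (A :&: B)).
Proof.
move=> tAB E1A E2B; have rank := rank_rho M_family T.
have E2K := subset_trans E2B (clique_sub_complete B).
have shift1 := rank_setU_shift rank E1A (clique_sub_complete A) E2K.
have shift2 := rank_setU_shift rank E2B (clique_sub_complete B) (clique_sub_complete A).
have modular := clique_modular tAB.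
rewrite setUC [E2 :|: _]setUC in shift2.
by move: shift1 shift2 modular; conv_lia.
Qed.

(* Otherwise the edge e of E1 at u is spanned by K_B, hence by submodularity
   by K_{A :&: B}; but u has degree 1 in e |: K_{A :&: B}, so e is a coloop. *)
Lemma rho_lt_private_vertex A B E1 E2 u : 0 < d -> t <= #|A :&: B| ->
  E1 \subset clique A -> E2 \subset clique B -> u \in verts E1 -> u \notin B ->
  rho E2 < rho (E1 :|: E2).
Proof.
move=> d_gt0 tAB E1A E2B /bigcupP [e eE1 ue] uB; have rank := rank_rho M_family T.
have eA := subsetP E1A e eE1; have eK := subsetP (clique_sub_complete A) e eA.
rewrite ltnNge; apply/negP => spanned.
have span_e : rho (e |: clique B) <= rho (clique B).
  apply: (spanned_mono rank E2B) (clique_sub_complete B) eK _.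
  apply: leq_trans spanned; rewrite (rank_mono rank) ?setSU ?sub1set //.
  by rewrite subUset (subset_trans E1A) ?(subset_trans E2B) ?clique_sub_complete.
set Y := A :&: B.
have eY : e \notin clique Y.
  by rewrite inE negb_and; apply/orP; right; apply: contra uB => /subsetP /(_ u ue) /setIP [].
have coloop : rho (e |: clique Y) = (rho (clique Y)).+1.
  apply: (rho_coloop (z := u)) (clique_sub_complete Y) eK eY ue _.
  apply: leq_trans d_gt0; rewrite -(cards1 e); apply: subset_leq_card.
  apply/subsetP => f; rewrite !inE => /andP [/orP [//|/andP [_ fY]] uf].
  by move/subsetP: fY => /(_ u uf) /setIP [_]; rewrite (negbTE uB).
have eYA : e |: clique Y \subset clique A by rewrite subUset sub1set eA clique_mono ?subsetIl.
have := subclique_submod tAB eYA (subxx (clique B)).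
rewrite -setUA (setUidPr (clique_mono (subsetIr A B))) coloop addSn addnC.
by move/leq_trans/(_ (leq_add span_e (leqnn _))); rewrite ltnn.
Qed.

Lemma vertically_connected_card_verts G k : is_graph G -> t <= k -> 0 < d ->
  vertically_connected G (@M T G) (rK M k + 2) -> k.+1 < #|verts G|.
Proof.
move=> gG tk d_gt0 vc; have rank := rank_rho M_family T.
have GK : G \subset complete T by rewrite -is_graph_complete.
have rankG : rK M k + 2 <= rho G by case: vc; rewrite (rho_restr M_family GK).
rewrite ltnNge; apply/negP => fewV.
have [smallV|] := leqP #|verts G| k.
  have : rho G <= rK M k.
    apply: leq_trans (rK_mono M_family smallV); rewrite (rK_clique M_family).
    by apply: (rank_mono rank); [apply: graph_sub_clique | apply: clique_sub_complete].
  by move: rankG; conv_lia.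
move=> kV; have cardV : #|verts G| = k.+1 by apply/eqP; rewrite eqn_leq fewV kV.
have [u uV] : exists u, u \in verts G by apply/set0Pn; rewrite -card_gt0 cardV.
set Y := verts G :\ u; set E1 := [set e in G | u \in e].
have cardY : #|Y| = k by move: cardV; rewrite (cardsD1 u) uV => -[].
have E1G : E1 \subset G by apply/subsetP => e; rewrite inE => /andP [].
have rE1 : rho E1 <= k.
  apply: leq_trans (rank_le_card rank (subset_trans E1G GK)) _.
  by rewrite -cardY -/(deg G u) deg_card_nbrs // subset_leq_card // nbrs_sub.
have rE2 : rho (G :\: E1) <= rK M k.
  rewrite -cardY (rK_clique M_family); apply: (rank_mono rank); last exact: clique_sub_complete.
  apply/subsetP => e /setDP [eG]; rewrite inE eG /= => ue.
  have := subsetP (graph_sub_clique gG) e eG; rewrite !inE => /andP [-> /= eV].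
  by apply/subsetP => x xe; rewrite !inE (subsetP eV) // andbT; apply: contraNneq ue => <-.
have rK_ge : k <= (rK M k).+1.
  by have := card_le_rho_clique Y d_gt0; rewrite -(rK_clique M_family) cardY.
have rE1G : rho E1 <= rho G := rank_mono rank E1G GK.
rewrite addn2 in vc rankG.
suff : rho G + rK M k < rho E1 + rho (G :\: E1) by rewrite ltnNge (leq_add rE1G rE2).
by apply: (rho_vertical_gap M_family gG vc E1G); conv_lia.
Qed.

Lemma vertically_connected_connect G k X u v : is_graph G -> t <= k -> 0 < d ->
  vertically_connected G (@M T G) (rK M k + 2) -> k.+1 < #|verts G| ->
  #|X| <= k -> u \in verts G :\: X -> v \in verts G :\: X -> connect (adj_del G X) u v.
Proof.
move=> gG tk d_gt0 vc manyV cardX uVX vVX.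
apply/negPn/negP => disc.
have [uv|uv] := eqVneq u v; first by rewrite uv connect0 in disc.
have [Y XY /and3P [/eqP cardY uY vY]] := extend_cut uVX vVX uv cardX manyV.
have disc' := contra (adj_del_connect_mono XY) disc.
have uV := subsetP (subsetDl _ X) u uVX; have vV := subsetP (subsetDl _ X) v vVX.
have [A [B [E1 [E1G AB E1A E2B /andP [/setDP [uE1 uB] /setDP [vE2 vA]]]]]] :=
  vertex_cut_separation gG uV vV uY vY disc'.
have tAB : t <= #|A :&: B| by rewrite AB cardY.
have partG : E1 :|: (G :\: E1) = G by rewrite -{2}(setID G E1) (setIidPr E1G).
have lt2 := rho_lt_private_vertex d_gt0 tAB E1A E2B uE1 uB.
have tBA : t <= #|B :&: A| by rewrite setIC.
have lt1 := rho_lt_private_vertex d_gt0 tBA E2B E1A vE2 vA.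
have sum := subclique_submod tAB E1A E2B.
rewrite setUC partG in lt1; rewrite partG in lt2 sum.
rewrite AB -(rK_clique M_family) cardY in sum; rewrite addn2 in vc.
by have := rho_vertical_gap M_family gG vc E1G lt1 lt2; rewrite ltnNge sum.
Qed.

Lemma vertically_connected_k_connected G k : is_graph G -> t <= k -> 0 < d ->
  vertically_connected G (@M T G) (rK M k + 2) -> k_connected G k.+1.
Proof.
move=> gG tk d_gt0 vc; have manyV := vertically_connected_card_verts gG tk d_gt0 vc.
by split=> // X _; rewrite ltnS => cardX u v; apply: (vertically_connected_connect (k := k)).
Qed.

End Cliques.

Lemma rK_step n : t <= n -> rK M n.+1 = rK M n + d.
Proof.
move=> tn; pose Y : {set 'I_n.+1} := [set~ ord_max].
have cardY : #|Y| = n by rewrite cardsC1 card_ord.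
have -> : rK M n.+1 = @M _ (complete 'I_n.+1) (clique (ord_max |: Y)).
  by rewrite setUCr -(rK_clique M_family) cardsT card_ord.
by rewrite -[n in rK M n]cardY (rK_clique M_family) rho_cliqueU1 ?cardY // !inE eqxx.
Qed.

Lemma dim_gt0 : unbounded M -> 0 < d.
Proof.
move=> unbounded_M; rewrite lt0n; apply/negP => /eqP d0.
have bounded n : rK M n <= rK M t.
  elim: n => [|n IH]; first exact: rK_mono.
  have [tn|nt] := leqP t n; first by rewrite rK_step // d0 addn0.
  exact: rK_mono.
by have [n] := unbounded_M (rK M t); rewrite ltnNge bounded.
Qed.

End Threshold.

End Dimensionality.

Theorem proposition3p5 (M : gm_family) (d t : nat) (k : nat)
  (T : finType) (G : {set {set T}}) :
  graph_matroid_family M -> nontrivial M -> unbounded M ->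
  dimensionality M d -> threshold M d t ->
  is_graph G -> t <= k ->
  vertically_connected G (M T G) (rK M k + 2) ->
  k_connected G k.+1.
Proof.
move=> M_family _ unbounded_M [_ circuit_deg].
case=> -[T0 [C0 [C0_circuit [[c0 c0V c0_deg] _] C0_card]]] _.
have d_gt0 := dim_gt0 M_family circuit_deg C0_circuit c0V c0_deg C0_card unbounded_M.
have := vertically_connected_k_connected M_family circuit_deg C0_circuit c0V c0_deg C0_card.
by move=> k_conn gG tk vc; apply: k_conn.
Qed.
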